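(* Let $1\le p<\infty$, $N\ge2$, and let $T_i=T_{f_i,\omega^{(i)}}$ ($1\le i\le N$) be unilateral pseudo-shifts on $\ell^p(\mathbb{N})$. If $f_i=f_\ell$ for some $i\ne\ell$, then $T_1,\dots,T_N$ fail to satisfy the Disjoint Hypercyclicity Criterion. In particular, unilateral weighted backward shifts $T_1,\dots,T_N$ on $\ell^p(\mathbb{N})$ never satisfy the Disjoint Hypercyclicity Criterion.
   Context: $\{e_m\}$ is the canonical basis of $\ell^p(\mathbb{N})$ over $\mathbb{K}\in\{\mathbb{R},\mathbb{C}\}$. For a strictly increasing $f:\mathbb{N}\to\mathbb{N}$ with $f(1)>1$ and a bounded, nonzero sequence of scalars $\omega=(w_{f(m)})_{m}$, the pseudo-shift is $T_{f,\omega}(\sum_m\alpha_me_m)=\sum_mw_{f(m)}\alpha_{f(m)}e_m$. A unilateral weighted backward shift with bounded weight sequence $(w_m)$ is $Te_m=w_me_{m-1}$ for $m\ge2$, $Te_1=0$ (the pseudo-shift with $f(m)=m+1$). Operators $T_1,\dots,T_N$ on $X$ satisfy the Disjoint Hypercyclicity Criterion if there exist a strictly increasing sequence $(n_k)$, dense subsets $X_0,\dots,X_N$ of $X$ and maps $S_{j,k}:X_j\to X$ with: $T_i^{n_k}\to0$ pointwise on $X_0$; $S_{j,k}\to0$ pointwise on $X_j$; $T_i^{n_k}S_{j,k}-\delta_{i,j}\mathrm{Id}\to0$ pointwise on $X_j$, for all $1\le i,j\le N$. *)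

(* Scalars: a Coquelicot AbsRing K (the theorem
   restricts K to R_AbsRing or C_AbsRing).  Sequences are indexed from 0:
   coordinate m (Rocq) = coordinate m+1 (paper). *)
From Stdlib Require Import Reals Lra.
From Coquelicot Require Import Coquelicot.
Open Scope R_scope.

(* a^p for a >= 0, with 0^p = 0 (Stdlib's Rpower 0 p = 1, so guard it) *)
Definition pw (a p : R) : R := if Rle_dec a 0 then 0 else Rpower a p.

Definition lp {K : AbsRing} (p : R) (x : nat -> K) : Prop :=
  ex_series (fun n => pw (abs (x n)) p).

Definition lp_norm {K : AbsRing} (p : R) (x : nat -> K) : R :=
  pw (Series (fun n => pw (abs (x n)) p)) (/ p).

Definition seq_minus {K : AbsRing} (x y : nat -> K) : nat -> K :=
  fun n => minus (x n) (y n).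

Definition seq_zero {K : AbsRing} : nat -> K := fun _ => zero.

Definition lp_dense {K : AbsRing} (p : R) (D : (nat -> K) -> Prop) : Prop :=
  (forall x, D x -> lp p x) /\
  (forall x, lp p x -> forall eps, 0 < eps ->
     exists d, D d /\ lp_norm p (seq_minus x d) < eps).

Definition lp_to0 {K : AbsRing} (p : R) (y : nat -> nat -> K) : Prop :=
  is_lim_seq (fun k => lp_norm p (y k)) 0.

(* pseudo-shift T_{f,w}: (T x)_m = w_{f(m)} x_{f(m)}; here w m stands for the
   paper's w_{f(m)} *)
Definition pseudo_shift {K : AbsRing} (f : nat -> nat) (w : nat -> K)
  (x : nat -> K) : nat -> K := fun m => mult (w m) (x (f m)).

Definition pseudo_shift_data {K : AbsRing} (f : nat -> nat) (w : nat -> K) : Prop :=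
  (forall m n, (m < n)%nat -> (f m < f n)%nat) /\ (0 < f 0)%nat /\
  (exists M, forall m, abs (w m) <= M) /\ (forall m, w m <> zero).

(* unilateral weighted backward shift: T e_m = w_m e_{m-1} (m >= 1), T e_0 = 0,
   i.e. (T x)_m = w_{m+1} x_{m+1} *)
Definition backward_shift {K : AbsRing} (w : nat -> K) (x : nat -> K) : nat -> K :=
  fun m => mult (w (S m)) (x (S m)).

Definition backward_shift_weights {K : AbsRing} (w : nat -> K) : Prop :=
  (exists M, forall m, abs (w m) <= M) /\ (forall m, (1 <= m)%nat -> w m <> zero).

Definition DHC {K : AbsRing} (p : R) (N : nat) (T : nat -> (nat -> K) -> (nat -> K)) : Prop :=
  exists (nk : nat -> nat),
    (forall k, (nk k < nk (S k))%nat) /\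
  exists (X0 : (nat -> K) -> Prop) (X : nat -> (nat -> K) -> Prop)
         (Sm : nat -> nat -> (nat -> K) -> (nat -> K)),
    lp_dense p X0 /\
    (forall j, (j < N)%nat -> lp_dense p (X j)) /\
    (forall j k x, (j < N)%nat -> X j x -> lp p (Sm j k x)) /\
    (forall i x, (i < N)%nat -> X0 x ->
       lp_to0 p (fun k => Nat.iter (nk k) (T i) x)) /\
    (forall j x, (j < N)%nat -> X j x ->
       lp_to0 p (fun k => Sm j k x)) /\
    (forall i j x, (i < N)%nat -> (j < N)%nat -> X j x ->
       lp_to0 p (fun k => seq_minus (Nat.iter (nk k) (T i) (Sm j k x))
                                    (if Nat.eqb i j then x else seq_zero))).

(* Take i <> l with f_i = f_l.  The 0-th coordinate of T_i^n y has modulus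
   A_i(n) |y_(f^n(0))|, and that of T_l^n y has modulus A_l(n) |y_(f^n(0))|,
   with the same coordinate of y and A_i, A_l products of moduli of weights.
   The criterion applied to a vector x with x_0 <> 0 in the dense set X_i
   produces, for all large k, a y with T_i^(n_k) y close to x and
   T_l^(n_k) y close to 0, forcing A_l(n_k) < A_i(n_k); applied to X_l it
   forces the reverse inequality for all large k.  Weighted backward shifts
   are the pseudo-shifts with f_i(m) = m + 1 for every i. *)
From Stdlib Require Import Reals Lra Lia.
From Coquelicot Require Import Coquelicot.
Open Scope R_scope.

Lemma pw_ge0 a p : 0 <= pw a p.
Proof.
  unfold pw; destruct (Rle_dec a 0); [lra | left; apply exp_pos].
Qed.

Lemma pw_Rpower a p : 0 < a -> pw a p = Rpower a p.
Proof. intro Ha; unfold pw; destruct (Rle_dec a 0); [lra | reflexivity]. Qed.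

Lemma pw_0 p : pw 0 p = 0.
Proof. unfold pw; destruct (Rle_dec 0 0); lra. Qed.

Lemma pw_le a b p : 0 <= p -> a <= b -> pw a p <= pw b p.
Proof.
  intros Hp Hab; unfold pw at 1; destruct (Rle_dec a 0); [apply pw_ge0 |].
  rewrite pw_Rpower by lra; apply Rle_Rpower_l; lra.
Qed.

Lemma pw_pw_inv a p : 0 <= a -> 0 < p -> pw (pw a p) (/ p) = a.
Proof.
  intros Ha Hp; destruct (Req_dec a 0) as [-> | Ha0]; [rewrite !pw_0; reflexivity |].
  rewrite (pw_Rpower a), pw_Rpower by (try apply exp_pos; lra).
  rewrite Rpower_mult, Rinv_r, Rpower_1; lra.
Qed.

Lemma pw_mult a b p : 0 <= a -> 0 <= b -> pw (a * b) p = pw a p * pw b p.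
Proof.
  intros Ha Hb.
  destruct (Req_dec a 0) as [-> | Ha0]; [rewrite Rmult_0_l, pw_0; ring |].
  destruct (Req_dec b 0) as [-> | Hb0]; [rewrite Rmult_0_r, pw_0; ring |].
  rewrite !pw_Rpower by nra; rewrite Rpower_mult_distr; lra.
Qed.

Lemma pw_le_add a b c p : 0 <= p -> 0 <= a -> 0 <= b -> c <= a + b ->
  pw c p <= pw 2 p * (pw a p + pw b p).
Proof.
  intros Hp Ha Hb Hc.
  assert (Hmax : c <= 2 * Rmax a b) by (unfold Rmax; destruct (Rle_dec a b); lra).
  apply Rle_trans with (1 := pw_le _ _ _ Hp Hmax).
  rewrite pw_mult by (try apply Rmax_Rle; lra).
  apply Rmult_le_compat_l; [apply pw_ge0 |].
  pose proof (pw_ge0 a p); pose proof (pw_ge0 b p).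
  unfold Rmax; destruct (Rle_dec a b); lra.
Qed.

Lemma ex_series_R0 : ex_series (fun _ : nat => 0).
Proof.
  apply ex_series_Reals_1; exists 0; intros eps Heps; exists 0%nat; intros n _.
  rewrite sum_cte, Rmult_0_l, R_dist_eq; exact Heps.
Qed.

Lemma ex_series_nonneg_le (a b : nat -> R) :
  (forall n, 0 <= a n <= b n) -> ex_series b -> ex_series a.
Proof.
  intros Hab Hb; apply (@ex_series_le R_AbsRing R_CompleteNormedModule a b); auto.
  intro n; change (norm (a n)) with (Rabs (a n)); rewrite Rabs_pos_eq; apply Hab.
Qed.

Section NonnegSeries.

Variable a : nat -> R.
Hypothesis a_ge0 : forall n, 0 <= a n.

Lemma sum_f_R0_le_Series n : ex_series a -> sum_f_R0 a n <= Series a.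
Proof.
  intro Ha; apply sum_incr; [| exact a_ge0].
  apply is_series_Reals, Series_correct, Ha.
Qed.

Lemma Series_ge0 : ex_series a -> 0 <= Series a.
Proof.
  intro Ha; apply Rle_trans with (2 := sum_f_R0_le_Series 0 Ha), a_ge0.
Qed.

Lemma sum_f_R0_le_mono k n : (k <= n)%nat -> sum_f_R0 a k <= sum_f_R0 a n.
Proof.
  induction 1 as [| n _ IH]; simpl; [lra |].
  specialize (a_ge0 (S n)); lra.
Qed.

Lemma sum_f_R0_subseq_le (f : nat -> nat) n :
  (forall m n, (m < n)%nat -> (f m < f n)%nat) ->
  sum_f_R0 (fun m => a (f m)) n <= sum_f_R0 a (f n).
Proof.
  intro Hf; induction n as [| n IH]; simpl.
  - destruct (f 0%nat) as [| j]; simpl; [lra |].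
    pose proof (cond_pos_sum a j a_ge0); lra.
  - specialize (Hf n (S n) (Nat.lt_succ_diag_r n)).
    destruct (f (S n)) as [| j]; [lia | simpl].
    pose proof (sum_f_R0_le_mono (f n) j ltac:(lia)); lra.
Qed.

Lemma ex_series_subseq (f : nat -> nat) :
  (forall m n, (m < n)%nat -> (f m < f n)%nat) ->
  ex_series a -> ex_series (fun m => a (f m)).
Proof.
  intros Hf Ha; apply ex_series_Reals_1, growing_cv.
  - intro n; simpl; specialize (a_ge0 (f (S n))); lra.
  - exists (Series a); intros s [n ->].
    apply Rle_trans with (1 := sum_f_R0_subseq_le f n Hf).
    apply sum_f_R0_le_Series, Ha.
Qed.

End NonnegSeries.

Lemma abs_le_minus_add {K : AbsRing} (a b : K) : abs a <= abs (minus a b) + abs b.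
Proof.
  replace a with (plus (minus a b) b) at 1 by
    (unfold minus; rewrite <- plus_assoc, plus_opp_l, plus_zero_r; reflexivity).
  apply abs_triangle.
Qed.

Section Lp.

Context {K : AbsRing} (p : R).
Hypothesis p_gt0 : 0 < p.

Lemma lp_zero : lp p (@seq_zero K).
Proof.
  unfold lp, seq_zero; apply (ex_series_ext (fun _ => 0)); [| exact ex_series_R0].
  intro n; rewrite abs_zero, pw_0; reflexivity.
Qed.

Lemma lp_seq_minus (x y : nat -> K) : lp p x -> lp p y -> lp p (seq_minus x y).
Proof.
  intros Hx Hy; unfold lp, seq_minus.
  apply ex_series_nonneg_le with
    (fun n => pw 2 p * (pw (abs (x n)) p + pw (abs (y n)) p)).
  - intro n; split; [apply pw_ge0 |].
    apply pw_le_add; try apply abs_ge_0; [lra |].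
    unfold minus; rewrite <- (abs_opp (y n)); apply abs_triangle.
  - exact (ex_series_scal_l (pw 2 p) _ (ex_series_plus _ _ Hx Hy)).
Qed.

Lemma lp_pseudo_shift f (w x : nat -> K) :
  pseudo_shift_data f w -> lp p x -> lp p (pseudo_shift f w x).
Proof.
  intros [Hf [_ [[M HM] _]]] Hx; unfold lp, pseudo_shift.
  apply ex_series_nonneg_le with (fun n => pw (Rabs M) p * pw (abs (x (f n))) p).
  - intro n; split; [apply pw_ge0 |].
    rewrite <- pw_mult by (apply Rabs_pos || apply abs_ge_0).
    apply pw_le; [lra |].
    apply Rle_trans with (1 := abs_mult _ _), Rmult_le_compat_r; [apply abs_ge_0 |].
    apply Rle_trans with (1 := HM n), Rle_abs.
  - apply (ex_series_scal_l (pw (Rabs M) p) (fun n => pw (abs (x (f n))) p)).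
    apply (ex_series_subseq (fun n => pw (abs (x n)) p)); auto using pw_ge0.
Qed.

Lemma lp_iter (T : (nat -> K) -> nat -> K) n x :
  (forall x, lp p x -> lp p (T x)) -> lp p x -> lp p (Nat.iter n T x).
Proof. intros HT Hx; induction n; simpl; auto. Qed.

Lemma abs_coord0_le_lp_norm (y : nat -> K) : lp p y -> abs (y 0%nat) <= lp_norm p y.
Proof.
  intro Hy; unfold lp_norm.
  rewrite <- (pw_pw_inv (abs (y 0%nat)) p) by (apply abs_ge_0 || exact p_gt0).
  apply pw_le; [left; apply Rinv_0_lt_compat, p_gt0 |].
  rewrite (Series_incr_1 _ Hy).
  assert (0 <= Series (fun k => pw (abs (y (S k))) p)); [| lra].
  apply Series_ge0; [intro; apply pw_ge0 |].
  apply (ex_series_incr_1 (fun n => pw (abs (y n)) p)), Hy.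
Qed.

Lemma lp_to0_coord0 (g : nat -> nat -> K) :
  (forall k, lp p (g k)) -> lp_to0 p g ->
  forall eps, 0 < eps -> eventually (fun k => abs (g k 0%nat) < eps).
Proof.
  intros Hg Hlim eps Heps; apply is_lim_seq_spec in Hlim.
  destruct (Hlim (mkposreal eps Heps)) as [k0 Hk0]; exists k0; intros k Hk.
  specialize (Hk0 k Hk); simpl in Hk0; rewrite Rminus_0_r in Hk0.
  pose proof (abs_coord0_le_lp_norm (g k) (Hg k)).
  pose proof (Rle_abs (lp_norm p (g k))); lra.
Qed.

Lemma lp_dense_coord0_neq0 (D : (nat -> K) -> Prop) :
  lp_dense p D -> exists x, D x /\ x 0%nat <> zero.
Proof.
  intros [HD Hdense].
  set (e0 := fun n : nat => match n with O => (one : K) | S _ => zero end).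
  assert (He0 : lp p e0).
  { apply (ex_series_incr_1 (fun n => pw (abs (e0 n)) p)), lp_zero. }
  destruct (Hdense e0 He0 1 Rlt_0_1) as [d [Hd Hnorm]].
  exists d; split; [exact Hd | intro Hd0].
  pose proof (abs_coord0_le_lp_norm _ (lp_seq_minus e0 d He0 (HD d Hd))) as Hcoord.
  replace (seq_minus e0 d 0%nat) with (one : K) in Hcoord
    by (unfold seq_minus; rewrite Hd0; symmetry; exact (minus_zero_r (one : K))).
  rewrite abs_one in Hcoord; lra.
Qed.

End Lp.

Lemma DHC_eventually_coord0_lt {K : AbsRing} p N (T : nat -> (nat -> K) -> nat -> K) :
  0 < p -> (forall i x, (i < N)%nat -> lp p x -> lp p (T i x)) -> DHC p N T ->
  exists nk : nat -> nat, forall i l, (i < N)%nat -> (l < N)%nat -> i <> l ->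
    eventually (fun k => exists y,
      abs (Nat.iter (nk k) (T l) y 0%nat) < abs (Nat.iter (nk k) (T i) y 0%nat)).
Proof.
  intros Hp HT [nk [_ [_ [X [Sm [_ [HXd [HSlp [_ [_ Hconv]]]]]]]]]].
  exists nk; intros i l Hi Hl Hil.
  destruct (lp_dense_coord0_neq0 p Hp _ (HXd i Hi)) as [x [Hx Hx0]].
  assert (Hxlp : lp p x) by exact (proj1 (HXd i Hi) x Hx).
  assert (Hiter : forall j k, (j < N)%nat -> lp p (Nat.iter (nk k) (T j) (Sm i k x)))
    by (intros j k Hj; apply lp_iter; auto).
  assert (Heps : 0 < abs (x 0%nat) / 2) by (pose proof (abs_gt_0 _ Hx0); lra).
  pose proof (Hconv i i x Hi Hi Hx) as Hii; rewrite Nat.eqb_refl in Hii.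
  pose proof (Hconv l i x Hl Hi Hx) as Hli.
  rewrite (proj2 (Nat.eqb_neq l i) (not_eq_sym Hil)) in Hli.
  apply (lp_to0_coord0 p Hp) with (eps := abs (x 0%nat) / 2) in Hii, Hli;
    first [exact Heps | intro k; apply lp_seq_minus; auto using lp_zero | idtac].
  eapply filter_imp; [| exact (filter_and _ _ Hii Hli)]; intros k [Hnear Hsmall].
  exists (Sm i k x); unfold seq_minus, seq_zero in *.
  rewrite (@minus_zero_r K) in Hsmall; rewrite abs_minus in Hnear.
  pose proof (abs_le_minus_add (x 0%nat) (Nat.iter (nk k) (T i) (Sm i k x) 0%nat)); lra.
Qed.

Section PseudoShifts.

Variable K : AbsRing.
Hypothesis abs_mult_eq : forall a b : K, abs (mult a b) = abs a * abs b.

Fixpoint weight_prod (f : nat -> nat) (w : nat -> K) (n m : nat) : R :=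
  match n with O => 1 | S n => abs (w m) * weight_prod f w n (f m) end.

Lemma abs_iter_pseudo_shift f (w y : nat -> K) n m :
  abs (Nat.iter n (pseudo_shift f w) y m) = weight_prod f w n m * abs (y (Nat.iter n f m)).
Proof.
  revert m; induction n as [| n IH]; intro m; simpl; [ring |].
  unfold pseudo_shift at 1; rewrite abs_mult_eq, IH.
  replace (Nat.iter n f (f m)) with (f (Nat.iter n f m)) by
    (clear; induction n; simpl; congruence).
  ring.
Qed.

Lemma weight_prod_lt_of_abs_iter_lt f (w w' y : nat -> K) n m :
  abs (Nat.iter n (pseudo_shift f w) y m) < abs (Nat.iter n (pseudo_shift f w') y m) ->
  weight_prod f w n m < weight_prod f w' n m.
Proof.
  rewrite !abs_iter_pseudo_shift; intro Hlt.
  pose proof (abs_ge_0 (y (Nat.iter n f m))).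
  destruct (Rlt_or_le (weight_prod f w n m) (weight_prod f w' n m)); [assumption | nra].
Qed.

Theorem not_DHC_pseudo_shift_same_f p N (f : nat -> nat -> nat) (w : nat -> nat -> K) :
  1 <= p ->
  (forall i, (i < N)%nat -> pseudo_shift_data (f i) (w i)) ->
  (exists i l, (i < N)%nat /\ (l < N)%nat /\ i <> l /\ f i = f l) ->
  ~ DHC p N (fun i => pseudo_shift (f i) (w i)).
Proof.
  intros Hp Hdata [i [l [Hi [Hl [Hil Hf]]]]] HD.
  assert (Hp0 : 0 < p) by lra.
  destruct (DHC_eventually_coord0_lt p N _ Hp0
              (fun j x Hj => lp_pseudo_shift p Hp0 _ _ x (Hdata j Hj)) HD) as [nk Hev].
  destruct (filter_and _ _ (Hev i l Hi Hl Hil) (Hev l i Hl Hi (not_eq_sym Hil)))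
    as [k0 Hk0].
  destruct (Hk0 k0 (le_n k0)) as [[y Hy] [y' Hy']].
  rewrite Hf in Hy, Hy'.
  apply weight_prod_lt_of_abs_iter_lt in Hy, Hy'; lra.
Qed.

Theorem not_DHC_backward_shift p N (w : nat -> nat -> K) :
  1 <= p -> (2 <= N)%nat ->
  (forall i, (i < N)%nat -> backward_shift_weights (w i)) ->
  ~ DHC p N (fun i => backward_shift (w i)).
Proof.
  intros Hp HN Hw.
  apply (not_DHC_pseudo_shift_same_f p N (fun _ => S) (fun i m => w i (S m)) Hp).
  - intros i Hi; destruct (Hw i Hi) as [[M HM] Hnz].
    repeat split; [intros; lia | lia | exists M; auto | intro m; apply Hnz; lia].
  - exists 0%nat, 1%nat; repeat split; lia.
Qed.

End PseudoShifts.

Theorem corollary2p9 (K : AbsRing) (HK : K = R_AbsRing \/ K = C_AbsRing)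
  (p : R) (hp : 1 <= p) (N : nat) (hN : (2 <= N)%nat) :
  (forall (f : nat -> nat -> nat) (w : nat -> nat -> K),
     (forall i, (i < N)%nat -> pseudo_shift_data (f i) (w i)) ->
     (exists i l, (i < N)%nat /\ (l < N)%nat /\ i <> l /\ f i = f l) ->
     ~ DHC p N (fun i => pseudo_shift (f i) (w i)))
  /\
  (forall (w : nat -> nat -> K),
     (forall i, (i < N)%nat -> backward_shift_weights (w i)) ->
     ~ DHC p N (fun i => backward_shift (w i))).
Proof.
  assert (Hmult : forall a b : K, abs (mult a b) = abs a * abs b).
  { destruct HK; subst K; [exact Rabs_mult | exact Cmod_mult]. }
  split; intros.
  - apply not_DHC_pseudo_shift_same_f; assumption.
  - apply not_DHC_backward_shift; assumption.
Qed.
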